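(* Let $T>0$. For $n=0,1,2,\dots$ let $\mathcal{H}_n(x,t)$ denote the two-dimensional Hermite polynomials defined for $t>0$ by $$\mathcal{H}_{n}(x,t)=\frac{(-t)^n}{n!}\,e^{\frac{x^2}{2t}}\frac{d^n}{dx^n}\Big(e^{-\frac{x^2}{2t}}\Big),$$ and $\mathcal{H}_n(x,0)=\frac{x^n}{n!}$ (equivalently, $\mathcal{H}_0=1$, $\mathcal{H}_{-1}=0$, $(n+1)\mathcal{H}_{n+1}(x,t)=x\,\mathcal{H}_n(x,t)-t\,\mathcal{H}_{n-1}(x,t)$; e.g. $\mathcal{H}_1=x$, $\mathcal{H}_2=\frac{x^2}{2}-\frac{t}{2}$). For each $n\ge 0$ let $\{\mathcal{P}_{m,n}(t)\}_{m=0}^{\infty}$ be the family of orthogonal polynomials on $(0,T)$ with respect to the weight $\omega_n(t)=t^n$, where $\mathcal{P}_{m,n}$ has degree $m$, i.e. $\int_0^T t^n\,\mathcal{P}_{r,n}(t)\mathcal{P}_{s,n}(t)\,dt=0$ for $r\neq s$. Then every polynomial in the two variables $t$ and $x$ lies in the linear span of the set $\{\mathcal{P}_{m,n}(t)\,\mathcal{H}_n(x,t)\}_{m,n=0}^{\infty}$.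
   Context: The set $\{\mathcal{P}_{m,n}(t)\mathcal{H}_n(x,t)\}_{m,n\ge 0}$ is orthogonal in the space $\mathbb{L}^2_{\gamma_t}(\mathbb{R}\times[0,T])$ of functions $f(x,t)$ with $\int_0^T\int_{-\infty}^{\infty} f(x,t)^2\gamma_t\,dx\,dt<\infty$, where $\gamma_t=\frac{1}{\sqrt{2\pi t}}e^{-x^2/(2t)}$. *)

From HB Require Import structures.
From mathcomp Require Import all_boot all_order all_algebra.
From mathcomp Require Import all_classical all_reals all_analysis.
Set Implicit Arguments. Unset Strict Implicit. Unset Printing Implicit Defensive.
Import Order.TTheory GRing.Theory Num.Theory.
Local Open Scope ring_scope.

(* Bivariate polynomials in (x,t) are represented as {poly {poly R}}:
   the outer variable 'X is x, coefficients are polynomials in t. *)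
Section Hermite.
Variable R : fieldType.

Definition tvar : {poly {poly R}} := ('X : {poly R})%:P.

Fixpoint hermite2_pair (n : nat) : {poly {poly R}} * {poly {poly R}} :=
  match n with
  | 0 => (1, 'X)
  | k.+1 => let (a, b) := hermite2_pair k in
            (b, ((k.+2)%:R^-1)%:P%:P * ('X * b - tvar * a))
  end.

Definition hermite2 (n : nat) : {poly {poly R}} := (hermite2_pair n).1.
End Hermite.

Definition in_span2 (R : fieldType) (f : nat -> nat -> {poly {poly R}})
  (p : {poly {poly R}}) : Prop :=
  exists (N : nat) (c : nat -> nat -> R),
    p = \sum_(m < N) \sum_(n < N) (c m n)%:P%:P * f m n.

(* The family is triangular twice over.  In the variable x, H_n has degree n
   with a nonzero constant leading coefficient 1/n!, so every polynomial in
   (x,t) is a sum of terms g_n(t) H_n(x,t); in the variable t, P_{m,n} has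
   degree m, so each g_n is a combination of the P_{m,n}.  Both steps are
   instances of one fact: a family b_k of polynomials with deg b_k = k and
   invertible leading coefficients spans all polynomials, since subtracting a
   multiple of b_N kills the coefficient of degree N.  Only the degrees of the
   P_{m,n} matter. *)

From HB Require Import structures.
From mathcomp Require Import all_boot all_order all_algebra.
From mathcomp Require Import all_classical all_reals all_analysis.
Import Order.TTheory GRing.Theory Num.Theory.
Local Open Scope ring_scope.

Lemma poly_ind_triangular (A : unitRingType) (b : nat -> {poly A})
    (S : {poly A} -> Prop) :
  (forall k, size (b k) = k.+1) ->
  (forall k, lead_coef (b k) \is a GRing.unit) ->
  S 0 -> (forall p q, S p -> S q -> S (p + q)) ->
  (forall a k, S (a%:P * b k)) ->
  forall p, S p.
Proof.
move=> size_b unit_b S0 SD Sb p.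
elim: (size p) {-2}p (leqnn (size p)) => [|N IHN] {}p le_p_N.
  by move: le_p_N; rewrite leqn0 size_poly_eq0 => /eqP ->.
have lead_bN : lead_coef (b N) = (b N)`_N by rewrite lead_coefE size_b.
set a := p`_N / lead_coef (b N).
have -> : p = (p - a%:P * b N) + a%:P * b N by rewrite subrK.
apply: SD (Sb a N); apply: IHN; apply/leq_sizeP => j le_N_j.
rewrite coefB coefCM; case: ltngtP le_N_j => // [lt_N_j | <-] _.
  rewrite (leq_sizeP _ _ le_p_N) // (leq_sizeP _ _ (eq_leq (size_b N))) //.
  by rewrite mulr0 subr0.
by rewrite -lead_bN divrK ?subrr.
Qed.

Section Span.
Variables (R : fieldType) (f : nat -> nat -> {poly {poly R}}).

Lemma in_span2_0 : in_span2 f 0.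
Proof. by exists 0%N, (fun _ _ => 0); rewrite big_ord0. Qed.

Lemma in_span2_widen N M (c : nat -> nat -> R) : (N <= M)%N ->
  \sum_(m < N) \sum_(n < N) (c m n)%:P%:P * f m n =
  \sum_(m < M) \sum_(n < M)
     (if (m < N)%N && (n < N)%N then c m n else 0)%:P%:P * f m n.
Proof.
move=> le_N_M.
rewrite (big_ord_widen M (fun m => \sum_(n < N) (c m n)%:P%:P * f m n)) //.
rewrite big_mkcond; apply: eq_bigr => m _ /=.
case: (m < N)%N; last by rewrite big1 // => n _; rewrite !polyC0 mul0r.
rewrite (big_ord_widen M (fun n => (c m n)%:P%:P * f m n)) // big_mkcond.
by apply: eq_bigr => n _ /=; case: (n < N)%N; rewrite // !polyC0 mul0r.
Qed.

Lemma in_span2D p q : in_span2 f p -> in_span2 f q -> in_span2 f (p + q).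
Proof.
move=> [N1 [c1 ->]] [N2 [c2 ->]].
exists (maxn N1 N2), (fun m n =>
  (if (m < N1)%N && (n < N1)%N then c1 m n else 0) +
  (if (m < N2)%N && (n < N2)%N then c2 m n else 0)).
rewrite (in_span2_widen _ _ c1 (leq_maxl N1 N2))
  (in_span2_widen _ _ c2 (leq_maxr N1 N2)).
rewrite -big_split; apply: eq_bigr => m _; rewrite -big_split.
by apply: eq_bigr => n _ /=; rewrite !rmorphD mulrDl.
Qed.

Lemma in_span2_polyCM a p : in_span2 f p -> in_span2 f (a%:P%:P * p).
Proof.
move=> [N [c ->]]; exists N, (fun m n => a * c m n).
rewrite mulr_sumr; apply: eq_bigr => m _; rewrite mulr_sumr.
by apply: eq_bigr => n _; rewrite !polyCM mulrA.
Qed.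

Lemma mem_in_span2 m n : in_span2 f (f m n).
Proof.
exists (maxn m n).+1, (fun i j => ((i == m) && (j == n))%:R).
have lt_m : (m < (maxn m n).+1)%N by rewrite ltnS leq_maxl.
have lt_n : (n < (maxn m n).+1)%N by rewrite ltnS leq_maxr.
rewrite (bigD1 (Ordinal lt_m)) //= [X in _ + X]big1 => [|i]; last first.
  rewrite -val_eqE /= => /negbTE ne_i_m.
  by rewrite big1 // => j _; rewrite ne_i_m !polyC0 mul0r.
rewrite addr0 (bigD1 (Ordinal lt_n)) //= [X in _ + X]big1 => [|j]; last first.
  by rewrite -val_eqE /= => /negbTE ->; rewrite andbF !polyC0 mul0r.
by rewrite !eqxx !polyC1 mul1r addr0.
Qed.

End Span.

Section Hermite.
Variable R : numFieldType.
Local Notation H := (hermite2 R).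

Lemma hermite2_pairE n : hermite2_pair R n = (H n, H n.+1).
Proof. by rewrite /hermite2 /=; case: (hermite2_pair R n). Qed.

Lemma hermite2SS n :
  H n.+2 = ((n.+2)%:R^-1)%:P%:P * ('X * H n.+1 - tvar R * H n).
Proof. by rewrite {1}/hermite2 /= hermite2_pairE. Qed.

Lemma size_lead_coef_hermite2 n :
  size (H n) = n.+1 /\ lead_coef (H n) = (n`!%:R^-1)%:P.
Proof.
suff [] : (size (H n) = n.+1 /\ lead_coef (H n) = (n`!%:R^-1)%:P) /\
    (size (H n.+1) = n.+2 /\ lead_coef (H n.+1) = (n.+1`!%:R^-1)%:P) by [].
elim: n => [|n [IHn [size_Hn1 lead_Hn1]]].
  rewrite /hermite2 /= size_poly1 size_polyX lead_coef1 lead_coefX.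
  by rewrite !invr1 polyC1.
split=> //.
have Hn1_neq0 : H n.+1 != 0 by rewrite -size_poly_eq0 size_Hn1.
have size_XH : size ('X * H n.+1) = n.+3 by rewrite mulrC size_mulX // size_Hn1.
have size_tH : size (tvar R * H n) = n.+1.
  by rewrite size_Cmul ?polyX_eq0 // IHn.1.
have lt_tH_XH : (size (- (tvar R * H n))%R < size ('X * H n.+1)%R)%N.
  by rewrite size_polyN size_tH size_XH.
have cst_neq0 : ((n.+2)%:R^-1 : R)%:P != 0.
  by rewrite polyC_eq0 invr_eq0 pnatr_eq0.
rewrite hermite2SS size_Cmul ?polyC_eq0 // size_polyDl // size_XH.
split=> //; rewrite lead_coefM lead_coefC lead_coefDl //.
by rewrite (mulrC 'X) lead_coefMX lead_Hn1 (factS n.+1) natrM invfM polyCM mulrC.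
Qed.

Lemma size_hermite2 n : size (H n) = n.+1.
Proof. exact: (size_lead_coef_hermite2 n).1. Qed.

Lemma lead_coef_hermite2 n : lead_coef (H n) = (n`!%:R^-1)%:P.
Proof. exact: (size_lead_coef_hermite2 n).2. Qed.

Lemma lead_coef_hermite2_unit n : lead_coef (H n) \is a GRing.unit.
Proof.
rewrite lead_coef_hermite2; apply: rmorph_unit.
by rewrite unitfE invr_eq0 pnatr_eq0 -lt0n fact_gt0.
Qed.

End Hermite.

Section Hermite_span.
Variables (R : fieldType) (P : nat -> nat -> {poly R}).
Hypothesis size_P : forall m n, size (P m n) = m.+1.
Let f m n := (P m n)%:P * hermite2 R n.

Lemma in_span2_polyC_hermite2 n g : in_span2 f (g%:P * hermite2 R n).
Proof.
apply: (@poly_ind_triangular _ (P^~ n) (fun g => in_span2 f (g%:P * _))) => //.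
- by move=> m; rewrite unitfE lead_coef_eq0 -size_poly_eq0 size_P.
- by rewrite mul0r; exact: in_span2_0.
- by move=> g1 g2 g1_span g2_span; rewrite rmorphD mulrDl; exact: in_span2D.
- by move=> a m; rewrite rmorphM -mulrA; exact/in_span2_polyCM/mem_in_span2.
Qed.

End Hermite_span.

Theorem theorem2 (R : realType) (T : R) (hT : 0 < T)
  (P : nat -> nat -> {poly R})
  (hdeg : forall m n, size (P m n) = m.+1)
  (horth : forall n r s, r <> s ->
     Rintegral lebesgue_measure `]0, T[%classic
       (fun t => t ^+ n * (P r n).[t] * (P s n).[t]) = 0) :
  forall p : {poly {poly R}},
    in_span2 (fun m n => (P m n)%:P * hermite2 R n) p.
Proof.
apply: (@poly_ind_triangular _ (hermite2 R)).
- exact: size_hermite2.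
- exact: lead_coef_hermite2_unit.
- exact: in_span2_0.
- by move=> p q; exact: in_span2D.
- by move=> g n; exact: in_span2_polyC_hermite2.
Qed.
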